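(* Let $X$ be a series-parallel poset, write $Z_X(x)=\sum_{i=1}^{|X|}c_i\frac{x^i}{(1-x)^{i+1}}$, and let $h^*(x)=\sum_{j=0}^{|X|}h^*_jx^j:=\frac{(1-x)^{|X|+1}}{x}Z^+_X(x)$. Then for every $0\le j\le |X|$, \[ h^*_j=\sum_{i=1}^{|X|-j}(-1)^{|X|-i+j}\,c_i\binom{|X|-i}{j}, \] and $c_{|X|}=\sum_{i=0}^{|X|}h^*_i$.
   Context: For $n\ge1$, $\langle n\rangle$ is the chain $1<\dots<n$. For a finite poset $X$, $\Omega(X,n)$ (resp. $\Omega^+(X,n)$) is the number of maps $f:X\to\langle n\rangle$ with $u<v\Rightarrow f(u)<f(v)$ (resp. $u\le v\Rightarrow f(u)\le f(v)$); $Z_X(x)=\sum_{n\ge1}\Omega(X,n)x^n$, $Z^+_X(x)=\sum_{n\ge1}\Omega^+(X,n)x^n$. For a series-parallel poset, $Z_X$ is a finite linear combination $\sum_{i=1}^{|X|}c_i x^i/(1-x)^{i+1}$ (the $c_i$ are uniquely determined). The concatenation $\mu(Y,W)$ is the disjoint union of $Y$ and $W$ with every element of $Y$ below every element of $W$; $Y\sqcup W$ is the disjoint union with no relations. Series-parallel posets form the smallest class of finite posets containing the one-element poset and closed under $\mu$ and $\sqcup$. *)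

From HB Require Import structures.
From mathcomp Require Import all_boot all_order all_algebra.
Set Implicit Arguments. Unset Strict Implicit. Unset Printing Implicit Defensive.
Import Order.TTheory GRing.Theory Num.Theory.

(* Syntax trees: the one-element poset, concatenation mu(Y,W), disjoint union. *)
Inductive sp_term : Type :=
  | SP_one : sp_term
  | SP_ser : sp_term -> sp_term -> sp_term   (* mu(Y, W): Y below W *)
  | SP_par : sp_term -> sp_term -> sp_term.

Fixpoint sp_car (t : sp_term) : finType :=
  match t with
  | SP_one => unit
  | SP_ser a b => (sp_car a + sp_car b)%type
  | SP_par a b => (sp_car a + sp_car b)%type
  end.

Fixpoint sp_le (t : sp_term) : rel (sp_car t) :=
  match t as t0 return rel (sp_car t0) with
  | SP_one => fun _ _ => true
  | SP_ser a b => fun x y =>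
      match x, y with
      | inl x', inl y' => sp_le x' y'
      | inr x', inr y' => sp_le x' y'
      | inl _, inr _ => true
      | inr _, inl _ => false
      end
  | SP_par a b => fun x y =>
      match x, y with
      | inl x', inl y' => sp_le x' y'
      | inr x', inr y' => sp_le x' y'
      | _, _ => false
      end
  end.

Definition series_parallel (T : finType) (le : rel T) : Prop :=
  exists (t : sp_term) (f : T -> sp_car t),
    bijective f /\ forall x y, le x y = sp_le (f x) (f y).

(* The chain <n> = {1 < ... < n} is represented by 'I_n = {0 < ... < n-1}. *)

Definition Omega (T : finType) (le : rel T) (n : nat) : nat :=
  #|[set g : {ffun T -> 'I_n} |
      [forall u, forall v, ((u != v) && le u v) ==> (g u < g v)%N]]|.

Definition Omega_plus (T : finType) (le : rel T) (n : nat) : nat :=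
  #|[set g : {ffun T -> 'I_n} |
      [forall u, forall v, le u v ==> (g u <= g v)%N]]|.

Local Open Scope ring_scope.

(* Coefficient of x^n in Z_X(x) = sum_{n>=1} Omega(X,n) x^n. *)
Definition Z_coef (T : finType) (le : rel T) (n : nat) : rat :=
  if n is 0 then 0 else (Omega le n)%:R.

(* Coefficient of x^n in Z^+_X(x) = sum_{n>=1} Omega^+(X,n) x^n. *)
Definition Zplus_coef (T : finType) (le : rel T) (n : nat) : rat :=
  if n is 0 then 0 else (Omega_plus le n)%:R.

(* Coefficient of x^n in the power series x^i / (1-x)^(i+1). *)
Definition frac_coef (i n : nat) : rat := ('C(n, i))%:R.

(* h^*_j := coefficient of x^j in (1-x)^(|X|+1) Z^+_X(x) / x, i.e. the
   coefficient of x^(j+1) in the (Cauchy) product (1-x)^(|X|+1) * Z^+_X(x). *)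
Definition hstar (T : finType) (le : rel T) (j : nat) : rat :=
  \sum_(k < j.+2)
     ((1 - 'X) ^+ (#|T|.+1) : {poly rat})`_k * Zplus_coef le (j.+1 - k).

From mathcomp Require Import all_boot all_order all_algebra.
From mathcomp Require Import zify ring.
From Stdlib Require Import FunctionalExtensionality.
Import Order.TTheory GRing.Theory Num.Theory.
Set Implicit Arguments. Unset Strict Implicit. Unset Printing Implicit Defensive.

(* Write N = |X|.  The key fact is Stanley's reciprocity for series-parallel
   posets: there is a polynomial P with P(0) = 0, Omega(X, n) = P(n) and
   Omega^+(X, n) = (-1)^N P(-n).  It is proved by induction on the
   series-parallel structure: the one-element poset has P = x; a disjoint union
   multiplies the polynomials; for a concatenation mu(Y, W) the counts are
   convolutions  Omega(n) = sum_m (Omega_Y(m) - Omega_Y(m-1)) Omega_W(n-m)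
   (and similarly for Omega^+), which we evaluate by expanding P in the basis
   of binomial polynomials binom(x, i) and using Vandermonde-type identities.

   Since Z_X has coefficients sum_i c_i binom(n, i), the polynomial P equals
   sum_i c_i binom(x, i); evaluating at -(n+1) gives the coefficients of Z^+_X,
   multiplying by (1-x)^(N+1) and using an alternating binomial identity gives
   h*_j = sum_i (-1)^(N+i+j) c_i binom(N-i, j), and both claims follow. *)

Definition count_maps (A : finType) (Q : pred (A -> nat)) (n : nat) : nat :=
  #|[set g : {ffun A -> 'I_n} | Q (fun x => nat_of_ord (g x))]|.

Definition strict_mono (A : finType) (le : rel A) : pred (A -> nat) := fun g =>
  [forall u, forall v, ((u != v) && le u v) ==> (g u < g v)%N].

Definition weak_mono (A : finType) (le : rel A) : pred (A -> nat) := fun g =>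
  [forall u, forall v, le u v ==> (g u <= g v)%N].

Lemma Omega_countE (A : finType) (le : rel A) n :
  Omega le n = count_maps (strict_mono le) n.
Proof. by []. Qed.

Lemma Omega_plus_countE (A : finType) (le : rel A) n :
  Omega_plus le n = count_maps (weak_mono le) n.
Proof. by []. Qed.

Lemma strict_mono_shift (A : finType) (le : rel A) (h : A -> nat) k :
  strict_mono le (fun x => h x + k)%N = strict_mono le h.
Proof. by apply: eq_forallb => u; apply: eq_forallb => v; rewrite ltn_add2r. Qed.

Lemma weak_mono_shift (A : finType) (le : rel A) (h : A -> nat) k :
  weak_mono le (fun x => h x + k)%N = weak_mono le h.
Proof. by apply: eq_forallb => u; apply: eq_forallb => v; rewrite leq_add2r. Qed.

Lemma count_maps_ext (A : finType) (Q Q' : pred (A -> nat)) n :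
  Q =1 Q' -> count_maps Q n = count_maps Q' n.
Proof. by move=> eqQ; apply: eq_card => g; rewrite !inE eqQ. Qed.

Lemma count_maps_bij (T C : finType) (f : T -> C) (Q : pred (T -> nat))
    (QC : pred (C -> nat)) n :
  bijective f -> (forall h : C -> nat, Q (h \o f) = QC h) ->
  count_maps Q n = count_maps QC n.
Proof.
move=> [f' fK f'K] HQ; pose Phi (h : {ffun C -> 'I_n}) := [ffun x => h (f x)].
have Phi_inj : injective Phi.
  move=> h1 h2 /ffunP E; apply/ffunP => y.
  by have := E (f' y); rewrite !ffunE f'K.
rewrite /count_maps -(card_imset _ Phi_inj); apply: eq_card => g.
rewrite inE; apply/idP/imsetP => [Qg | [h]].
  exists [ffun y => g (f' y)]; last by apply/ffunP => x; rewrite !ffunE fK.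
  rewrite inE -HQ; congr (Q _): Qg.
  by apply: functional_extensionality => x; rewrite /= ffunE fK.
rewrite inE -HQ => Qh ->; congr (Q _): Qh.
by apply: functional_extensionality => x; rewrite /= ffunE.
Qed.

Lemma count_maps_below (A : finType) (Q : pred (A -> nat)) n m : (m <= n)%N ->
  #|[set g : {ffun A -> 'I_n} |
      Q (fun x => nat_of_ord (g x)) && [forall x, (g x < m)%N]]| = count_maps Q m.
Proof.
move=> le_mn; pose Phi (h : {ffun A -> 'I_m}) := [ffun x => widen_ord le_mn (h x)].
have Phi_inj : injective Phi.
  move=> h1 h2 /ffunP E; apply/ffunP => x; apply: val_inj.
  by have := E x; rewrite !ffunE => /(congr1 val).
rewrite /count_maps -(card_imset _ Phi_inj); apply: eq_card => g.
rewrite inE; apply/idP/imsetP => [/andP[Qg /forallP lt_gm] | [h]].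
  exists [ffun x => Ordinal (lt_gm x)]; last first.
    by apply/ffunP => x; rewrite !ffunE; apply: val_inj.
  rewrite inE; congr (Q _): Qg.
  by apply: functional_extensionality => x; rewrite ffunE.
rewrite inE => Qh ->; apply/andP; split; last by apply/forallP => x; rewrite ffunE /=.
by congr (Q _): Qh; apply: functional_extensionality => x; rewrite ffunE.
Qed.

Lemma count_maps_above (A : finType) (Q : pred (A -> nat)) n k :
  #|[set g : {ffun A -> 'I_n} |
      Q (fun x => nat_of_ord (g x)) && [forall x, (k <= g x)%N]]|
  = count_maps (fun h => Q (fun x => h x + k)%N) (n - k).
Proof.
have addk_lt (i : 'I_(n - k)) : (i + k < n)%N by have := ltn_ord i; lia.
pose Phi (h : {ffun A -> 'I_(n - k)}) := [ffun x => Ordinal (addk_lt (h x))].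
have Phi_inj : injective Phi.
  move=> h1 h2 /ffunP E; apply/ffunP => x; apply: val_inj.
  by have := E x; rewrite !ffunE => /(congr1 val) /= /addIn.
rewrite /count_maps -(card_imset _ Phi_inj); apply: eq_card => g.
rewrite inE; apply/idP/imsetP => [/andP[Qg /forallP le_kg] | [h]].
  have subk_lt x : (g x - k < n - k)%N.
    by move: (le_kg x) (ltn_ord (g x)); move: (nat_of_ord (g x)) => y; lia.
  exists [ffun x => Ordinal (subk_lt x)].
    rewrite inE; congr (Q _): Qg; apply: functional_extensionality => x.
    by rewrite ffunE /= subnK.
  by apply/ffunP => x; rewrite !ffunE; apply: val_inj; rewrite /= subnK.
rewrite inE => Qh ->; apply/andP; split.
  by congr (Q _): Qh; apply: functional_extensionality => x; rewrite ffunE.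
by apply/forallP => x; rewrite ffunE leq_addl.
Qed.

Lemma count_maps_sum (A B : finType) (R : (A -> nat) -> (B -> nat) -> bool) n :
  count_maps (fun g => R (g \o inl) (g \o inr)) n
  = (\sum_(g1 : {ffun A -> 'I_n})
       #|[set g2 : {ffun B -> 'I_n} | R (fun a => g1 a) (fun b => g2 b)]|)%N.
Proof.
pose join (p : {ffun A -> 'I_n} * {ffun B -> 'I_n}) : {ffun A + B -> 'I_n} :=
  [ffun x => match x with inl a => p.1 a | inr b => p.2 b end].
have join_bij : bijective join.
  exists (fun g : {ffun A + B -> 'I_n} =>
    ([ffun a => g (inl a)] : {ffun A -> 'I_n}, [ffun b => g (inr b)] : {ffun B -> 'I_n})).
    by case=> g1 g2; congr (_, _); apply/ffunP => x; rewrite !ffunE.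
  by move=> g; apply/ffunP; case=> x; rewrite !ffunE.
rewrite /count_maps -sum1_card (reindex join (onW_bij _ join_bij)) /=.
rewrite (eq_bigl (fun p : {ffun A -> 'I_n} * {ffun B -> 'I_n} =>
                    R (fun a => p.1 a) (fun b => p.2 b))); last first.
  move=> [g1 g2]; rewrite inE /=.
  by congr R; apply: functional_extensionality => x; rewrite /= ffunE.
rewrite -(pair_big_dep xpredT
  (fun (g1 : {ffun A -> 'I_n}) (g2 : {ffun B -> 'I_n}) => R (fun a => g1 a) (fun b => g2 b))
                      (fun _ _ => 1%N)) /=.
by apply: eq_bigr => g1 _; rewrite -sum1_card; apply: eq_bigl => g2; rewrite inE.
Qed.

Lemma card_and_sum (X Y : finType) (p : pred X) (q : pred Y) :
  (\sum_(x : X) #|[set y | p x && q y]| = #|[set x | p x]| * #|[set y | q y]|)%N.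
Proof.
rewrite -sum_nat_const [RHS]big_mkcond /=; apply: eq_bigr => x _; rewrite inE.
by case: (p x); last by apply/eqP; rewrite cards_eq0; apply/eqP/setP => y; rewrite !inE.
Qed.

Lemma count_maps_and (A B : finType) (QA : pred (A -> nat)) (QB : pred (B -> nat)) n :
  count_maps (fun g => QA (g \o inl) && QB (g \o inr)) n
  = (count_maps QA n * count_maps QB n)%N.
Proof. by rewrite (count_maps_sum (fun hA hB => QA hA && QB hB)) card_and_sum. Qed.

Lemma sum_by_key (X : finType) (P : pred X) (key : X -> nat) (F : nat -> nat) n :
  (forall x, P x -> key x <= n)%N ->
  (\sum_(x | P x) F (key x) = \sum_(m < n.+1) #|[set x | P x && (key x == m)]| * F m)%N.
Proof.
move=> key_le; rewrite (partition_big (fun x => inord (key x) : 'I_n.+1) xpredT) //=.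
apply: eq_bigr => m _; rewrite -sum1_card big_distrl /=.
have key_ord x : P x -> key x = (inord (key x) : 'I_n.+1) :> nat.
  by move=> Px; rewrite inordK // ltnS key_le.
apply: eq_big => [x | x /andP[Px /eqP <-]]; last by rewrite mul1n -key_ord.
rewrite inE; case Px: (P x) => //=; apply/eqP/eqP => [<- | ->]; last exact: inord_val.
exact: key_ord.
Qed.

(* A condition "A-part below the B-part" expressed by a key of the A-part:
   the B-part ranges over maps with values >= key, a translation-invariant
   count.  This is the shape of both Omega and Omega^+ of a concatenation. *)
Lemma count_maps_threshold (A B : finType) (QA : pred (A -> nat)) (QB : pred (B -> nat))
    (key : (A -> nat) -> nat) n :
  (forall h k, QB (fun x => h x + k)%N = QB h) ->
  (forall g1 : {ffun A -> 'I_n}, key (fun a => g1 a) <= n)%N ->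
  count_maps (fun g => [&& QA (g \o inl), QB (g \o inr)
                          & [forall b, key (g \o inl) <= g (inr b)]]) n
  = (\sum_(m < n.+1) #|[set g1 : {ffun A -> 'I_n} |
                         QA (fun a => g1 a) && (key (fun a => g1 a) == m)]|
                     * count_maps QB (n - m))%N.
Proof.
move=> QB_shift key_le.
rewrite (count_maps_sum (fun hA hB => [&& QA hA, QB hB & [forall b, key hA <= hB b]])).
rewrite -(@sum_by_key _ (fun g1 : {ffun A -> 'I_n} => QA (fun a => g1 a))
           (fun g1 => key (fun a => g1 a)) (fun m => count_maps QB (n - m))) //.
rewrite [RHS]big_mkcond /=; apply: eq_bigr => g1 _.
case: (QA _) => /=; last by apply/eqP; rewrite cards_eq0; apply/eqP/setP => g2; rewrite !inE.
rewrite -(count_maps_ext _ (fun h => QB_shift h (key (fun a => g1 a)))) -count_maps_above.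
by apply: eq_card => g2; rewrite !inE.
Qed.

(* Number of maps whose key is exactly m, when "key <= j" means "all values
   < j + s": a difference of two consecutive counts (no subtraction for m = 0). *)
Lemma count_maps_level (A : finType) (Q : pred (A -> nat)) (key : (A -> nat) -> nat) s n m :
  (forall (g : A -> nat) j, (key g <= j) = [forall x, g x < j + s])%N -> (m + s <= n)%N ->
  (#|[set g : {ffun A -> 'I_n} | Q (fun x => g x) && (key (fun x => g x) == m)]|
   + (if m is 0 then 0 else count_maps Q (m.-1 + s)) = count_maps Q (m + s))%N.
Proof.
move=> key_le le_mn.
have below j : (j + s <= n)%N ->
    #|[set g : {ffun A -> 'I_n} | Q (fun x => g x) && (key (fun x => g x) <= j)%N]|
    = count_maps Q (j + s).
  by move=> le_jn; rewrite -(count_maps_below _ le_jn); apply: eq_card => g; rewrite !inE key_le.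
rewrite -(below m) // -[in RHS](cardsID [set g : {ffun A -> 'I_n} | key (fun x => g x) == m]).
congr (_ + _).
  by apply: eq_card => g; rewrite !inE; case: (key _ =P m) => [->|]; rewrite ?leqnn ?andbT ?andbF.
case: m le_mn => [|m] le_mn.
  apply/esym/eqP; rewrite cards_eq0; apply/eqP/setP => g; rewrite !inE leqn0.
  by case: eqP; rewrite ?andbF.
rewrite -(below m); last by lia.
by apply: eq_card => g; rewrite !inE -[(_ <= m)%N]ltnS ltn_neqAle andbCA.
Qed.

(* Keys used for concatenations: one more than the largest value (strict case)
   and the largest value (weak case). *)
Definition max_succ (A : finType) (g : A -> nat) : nat := \max_(a : A) (g a).+1.
Definition max_val (A : finType) (g : A -> nat) : nat := \max_(a : A) g a.

Lemma max_succ_le (A : finType) (g : A -> nat) j :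
  (max_succ g <= j)%N = [forall a, g a < j]%N.
Proof. by apply/bigmax_leqP/forallP => H a; [apply: H | move=> _; apply: H]. Qed.

Lemma max_val_le (A : finType) (g : A -> nat) j :
  (max_val g <= j)%N = [forall a, g a <= j]%N.
Proof. by apply/bigmax_leqP/forallP => H a; [apply: H | move=> _; apply: H]. Qed.

Lemma forall2_sum (A B : finType) (F : A + B -> A + B -> bool) :
  [forall u, forall v, F u v] =
  [&& [forall a, forall a', F (inl a) (inl a')], [forall b, forall b', F (inr b) (inr b')],
      [forall a, forall b, F (inl a) (inr b)] & [forall b, forall a, F (inr b) (inl a)]].
Proof.
apply/forallP/and4P => [H | [/forallP H1 /forallP H2 /forallP H3 /forallP H4] [u|u]].
- by split; apply/forallP => x; apply/forallP => y; apply: (forallP (H _)).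
- by apply/forallP => -[v|v]; [apply: (forallP (H1 u)) | apply: (forallP (H3 u))].
- by apply/forallP => -[v|v]; [apply: (forallP (H4 u)) | apply: (forallP (H2 u))].
Qed.

Lemma forall_true (A : finType) : [forall a : A, true].
Proof. exact/forallP. Qed.

Definition parR (A B : finType) (leA : rel A) (leB : rel B) : rel (A + B) :=
  fun x y => match x, y with
  | inl x', inl y' => leA x' y'
  | inr x', inr y' => leB x' y'
  | _, _ => false
  end.

Definition serR (A B : finType) (leA : rel A) (leB : rel B) : rel (A + B) :=
  fun x y => match x, y with
  | inl x', inl y' => leA x' y'
  | inr x', inr y' => leB x' y'
  | inl _, inr _ => true
  | inr _, inl _ => false
  end.

Section SeriesParallelCounts.
Variables (A B : finType) (leA : rel A) (leB : rel B).

Lemma strict_mono_par (g : A + B -> nat) : strict_mono (parR leA leB) g =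
  strict_mono leA (g \o inl) && strict_mono leB (g \o inr).
Proof. by rewrite /strict_mono forall2_sum /= !forall_true !andbT. Qed.

Lemma weak_mono_par (g : A + B -> nat) : weak_mono (parR leA leB) g =
  weak_mono leA (g \o inl) && weak_mono leB (g \o inr).
Proof. by rewrite /weak_mono forall2_sum /= !forall_true !andbT. Qed.

Lemma strict_mono_ser (g : A + B -> nat) : strict_mono (serR leA leB) g =
  [&& strict_mono leA (g \o inl), strict_mono leB (g \o inr)
    & [forall b, max_succ (g \o inl) <= g (inr b)]%N].
Proof.
rewrite /strict_mono forall2_sum /= !forall_true andbT; congr [&& _, _ & _].
apply/forallP/forallP => H b.
  by rewrite max_succ_le; apply/forallP => a; apply: (forallP (H a)).
by apply/forallP => a; move: (H a); rewrite max_succ_le => /forallP; apply.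
Qed.

Lemma weak_mono_ser (g : A + B -> nat) : weak_mono (serR leA leB) g =
  [&& weak_mono leA (g \o inl), weak_mono leB (g \o inr)
    & [forall b, max_val (g \o inl) <= g (inr b)]%N].
Proof.
rewrite /weak_mono forall2_sum /= !forall_true andbT; congr [&& _, _ & _].
apply/forallP/forallP => H b.
  by rewrite max_val_le; apply/forallP => a; apply: (forallP (H a)).
by apply/forallP => a; move: (H a); rewrite max_val_le => /forallP; apply.
Qed.

Lemma Omega_par n : Omega (parR leA leB) n = (Omega leA n * Omega leB n)%N.
Proof.
by rewrite !Omega_countE -count_maps_and; apply: count_maps_ext; apply: strict_mono_par.
Qed.

Lemma Omega_plus_par n :
  Omega_plus (parR leA leB) n = (Omega_plus leA n * Omega_plus leB n)%N.
Proof.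
by rewrite !Omega_plus_countE -count_maps_and; apply: count_maps_ext; apply: weak_mono_par.
Qed.

Local Open Scope ring_scope.

(* Omega of a concatenation: the top of the lower part is at m, the upper
   part lives in the remaining n - m values. *)
Lemma Omega_ser n : Omega leA 0 = 0%N ->
  (Omega (serR leA leB) n)%:R
  = \sum_(m < n.+1) ((Omega leA m)%:R - (Omega leA m.-1)%:R) * (Omega leB (n - m))%:R :> rat.
Proof.
move=> OmegaA0; rewrite Omega_countE (count_maps_ext _ strict_mono_ser).
rewrite count_maps_threshold; first last.
- by move=> g1; rewrite max_succ_le; apply/forallP => a; apply: ltn_ord.
- exact: strict_mono_shift.
rewrite natr_sum; apply: eq_bigr => m _; rewrite natrM; congr (_ * _).
have key_le (g : A -> nat) j : (max_succ g <= j)%N = [forall a, g a < j + 0]%N.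
  by rewrite addn0 max_succ_le.
have := count_maps_level (strict_mono leA) key_le (n := n) (m := m).
case: m => -[|m] lt_mn /=; rewrite !addn0 -!Omega_countE => /(_ lt_mn).
  by rewrite OmegaA0 subrr => ->.
by move=> <-; rewrite natrD addrK.
Qed.

(* Omega^+ of a concatenation: the largest value of the lower part is m, the
   upper part takes values in {m, ..., n-1}. *)
Lemma Omega_plus_ser n : Omega_plus leA 0 = 0%N -> Omega_plus leB 0 = 0%N ->
  (Omega_plus (serR leA leB) n)%:R
  = \sum_(m < n.+1) ((Omega_plus leA m.+1)%:R - (Omega_plus leA m)%:R)
                    * (Omega_plus leB (n - m))%:R :> rat.
Proof.
move=> OmegaA0 OmegaB0; rewrite Omega_plus_countE (count_maps_ext _ weak_mono_ser).
rewrite count_maps_threshold; first last.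
- by move=> g1; rewrite max_val_le; apply/forallP => a; apply: ltnW.
- exact: weak_mono_shift.
rewrite natr_sum; apply: eq_bigr => m _; rewrite natrM -Omega_plus_countE.
have [lt_mn | ge_mn] := ltnP m n; last first.
  have -> : (n - m = 0)%N by move: ge_mn (ltn_ord m); lia.
  by rewrite OmegaB0 !mulr0.
congr (_ * _).
have key_le (g : A -> nat) j : (max_val g <= j)%N = [forall a, g a < j + 1]%N.
  by rewrite max_val_le; apply: eq_forallb => a; rewrite addn1 ltnS.
have := count_maps_level (weak_mono leA) key_le (n := n) (m := m).
case: m lt_mn => -[|m] lt_mn' lt_mn /=; rewrite !addn1 -!Omega_plus_countE => /(_ lt_mn).
  by rewrite OmegaA0 subr0 addn0 => ->.
by move=> <-; rewrite natrD addrK.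
Qed.

End SeriesParallelCounts.

(* Vandermonde-type identity: choosing i+j+1 elements of {0..n-1} by the
   position m of the (i+1)-st one.  It evaluates Omega of a concatenation. *)
Lemma sum_binom_conv j : forall n i,
  \sum_(m < n) 'C(m, i) * 'C(n.-1 - m, j) = 'C(n, i + j + 1).
Proof.
elim: j => [|j IHj] n i.
  under eq_bigr do rewrite bin0 muln1.
  rewrite addn0 addn1; elim: n => [|n IHn]; first by rewrite big_ord0 bin0n.
  by rewrite big_ord_recr /= IHn binS addnC.
elim: n => [|n IHn]; first by rewrite big_ord0 bin0n addn1.
rewrite big_ord_recr /= subnn bin0n muln0 addn0.
rewrite (eq_bigr (fun m : 'I_n =>
    'C(m, i) * 'C(n.-1 - m, j.+1) + 'C(m, i) * 'C(n.-1 - m, j))); last first.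
  move=> m _; have -> : n - m = (n.-1 - m).+1 by have := ltn_ord m; lia.
  by rewrite binS mulnDr.
by rewrite big_split /= IHn IHj !addn1 addnS binS.
Qed.

Lemma sum_binom_conv_upper j : forall n i,
  \sum_(m < n.+1) 'C(m + i, i) * 'C(n - m + j, j) = 'C(n + i + j + 1, i + j + 1).
Proof.
elim: j => [|j IHj] n i.
  under eq_bigr do rewrite addn0 bin0 muln1.
  rewrite !addn0; elim: n => [|n IHn]; first by rewrite big_ord1 add0n !binn.
  rewrite big_ord_recr /= IHn.
  have -> : n.+1 + i + 1 = (n + i + 1).+1 by lia.
  have -> : n.+1 + i = n + i + 1 by lia.
  by rewrite [i + 1]addn1 binS.
elim: n => [|n IHn]; first by rewrite big_ord1 /= !add0n !binn.
rewrite (eq_bigr (fun m : 'I_n.+2 =>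
    'C(m + i, i) * 'C(n.+1 - m + j, j.+1) + 'C(m + i, i) * 'C(n.+1 - m + j, j))); last first.
  by move=> m _; rewrite addnS binS mulnDr.
rewrite big_split /= IHj big_ord_recr /= subnn add0n (bin_small (ltnSn j)) muln0 addn0.
rewrite (eq_bigr (fun m : 'I_n.+1 => 'C(m + i, i) * 'C(n - m + j.+1, j.+1))); last first.
  by move=> m _; have -> : n.+1 - m + j = n - m + j.+1 by have := ltn_ord m; lia.
rewrite IHn.
have -> : n.+1 + i + j + 1 = (n + i + j.+1).+1 by lia.
have -> : n.+1 + i + j.+1 + 1 = (n + i + j.+1).+2 by lia.
have -> : n + i + j.+1 + 1 = (n + i + j.+1).+1 by lia.
have -> : i + j.+1 + 1 = (i + j + 1).+1 by lia.
by rewrite [RHS]binS.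
Qed.

(* Shifted form: the m = n term vanishes. *)
Lemma sum_binom_conv_upper_succ n i j :
  \sum_(m < n.+1) 'C(m + i, i) * 'C(n - m + j, j.+1) = 'C(n + i + j + 1, i + j + 2).
Proof.
case: n => [|n].
  by rewrite big_ord1 add0n (bin_small (ltnSn j)) muln0 bin_small //; lia.
rewrite big_ord_recr /= subnn add0n (bin_small (ltnSn j)) muln0 addn0.
rewrite (eq_bigr (fun m : 'I_n.+1 => 'C(m + i, i) * 'C(n - m + j.+1, j.+1))); last first.
  by move=> m _; have -> : n.+1 - m + j = n - m + j.+1 by have := ltn_ord m; lia.
by rewrite sum_binom_conv_upper; congr binomial; lia.
Qed.

Section AlternatingSums.
Variable R : comNzRingType.
Local Open Scope ring_scope.

(* Partial alternating row sums: Pascal's rule telescopes. *)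
Lemma alt_sum_binom M j :
  \sum_(k < j.+1) (-1) ^+ k * ('C(M.+1, k))%:R = (-1) ^+ j * ('C(M, j))%:R :> R.
Proof.
elim: j => [|j IHj]; first by rewrite big_ord1 /= !bin0 !expr0.
by rewrite big_ord_recr /= IHj binS natrD exprS; ring.
Qed.

(* Convolution of a row of alternating binomials with a column: this is the
   coefficient extraction in (1-x)^M * sum_n binom(n+i, i) x^n. *)
Lemma alt_sum_binom_upper M i : (i < M)%N -> forall j,
  \sum_(k < j.+1) (-1) ^+ k * ('C(M, k))%:R * ('C(j - k + i, i))%:R
  = (-1) ^+ j * ('C(M.-1 - i, j))%:R :> R.
Proof.
case: M => [//|M]; elim: i => [|i IHi] lt_iM j.
  under eq_bigr do rewrite addn0 bin0 mulr1.
  by rewrite alt_sum_binom subn0.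
elim: j => [|j IHj]; first by rewrite big_ord1 /= !bin0 !binn expr0 !mul1r.
rewrite (eq_bigr (fun k : 'I_j.+2 =>
    (-1) ^+ k * ('C(M.+1, k))%:R * ('C(j.+1 - k + i, i.+1))%:R
  + (-1) ^+ k * ('C(M.+1, k))%:R * ('C(j.+1 - k + i, i))%:R)); last first.
  by move=> k _; rewrite addnS binS natrD mulrDr.
rewrite big_split /= IHi; last by lia.
rewrite big_ord_recr /= subnn add0n (bin_small (ltnSn i)) mulr0 addr0.
rewrite (eq_bigr (fun k : 'I_j.+1 =>
    (-1) ^+ k * ('C(M.+1, k))%:R * ('C(j - k + i.+1, i.+1))%:R)); last first.
  by move=> k _; have -> : (j.+1 - k + i = j - k + i.+1)%N by have := ltn_ord k; lia.
rewrite IHj /=; have -> : (M - i = (M - i.+1).+1)%N by lia.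
by rewrite binS natrD exprS; ring.
Qed.

(* Full alternating row sum: (1 - 1)^M. *)
Lemma alt_sum_binom_full M N : (M <= N)%N ->
  \sum_(j < N.+1) (-1) ^+ j * ('C(M, j))%:R = (M == 0%N)%:R :> R.
Proof.
case: M => [|M] le_MN; last by rewrite alt_sum_binom bin_small ?mulr0.
by rewrite big_ord_recl big1 ?addr0 ?mulr1 // => j _; rewrite bin0n mulr0.
Qed.

End AlternatingSums.

Section BinomialPolynomials.
Variable R : numFieldType.
Local Open Scope ring_scope.
Implicit Types (p q : {poly R}) (k n : nat).

Definition falling_poly k : {poly R} := \prod_(i < k) ('X - (i%:R)%:P).

Definition binom_poly k : {poly R} := (k`!%:R)^-1 *: falling_poly k.

Lemma fact_natr_neq0 k : (k`!%:R : R) != 0.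
Proof. by rewrite pnatr_eq0 -lt0n fact_gt0. Qed.

Lemma falling_poly_nat k n : (falling_poly k).[n%:R] = (n ^_ k)%:R.
Proof.
rewrite /falling_poly horner_prod; elim: k => [|k IHk]; first by rewrite big_ord0 ffactn0.
rewrite big_ord_recr /= IHk ffactnSr !hornerE.
have [le_kn | lt_nk] := leqP k n; first by rewrite natrM natrB.
by rewrite ffact_small // mul0r.
Qed.

Lemma falling_poly_neg k n :
  (falling_poly k).[- n%:R] = (-1) ^+ k * (((n + k).-1) ^_ k)%:R.
Proof.
rewrite /falling_poly horner_prod.
elim: k => [|k IHk]; first by rewrite big_ord0 ffactn0 expr0 mulr1.
rewrite big_ord_recr /= IHk !hornerE.
case E: (n + k)%N => [|m].
  have [-> ->] : n = 0%N /\ k = 0%N by lia.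
  by rewrite /= ffactn1 mulr0; ring.
have -> : ((n + k.+1).-1 = m.+1)%N by lia.
rewrite ffactSS natrM exprS /=.
have -> : (m.+1%:R : R) = n%:R + k%:R by rewrite -natrD E.
ring.
Qed.

Lemma binom_poly_nat k n : (binom_poly k).[n%:R] = ('C(n, k))%:R.
Proof.
by rewrite hornerZ falling_poly_nat -bin_ffact natrM mulrC mulrK // unitfE fact_natr_neq0.
Qed.

Lemma binom_poly_neg k n :
  (binom_poly k).[- n%:R] = (-1) ^+ k * ('C((n + k).-1, k))%:R.
Proof.
rewrite hornerZ falling_poly_neg -bin_ffact natrM.
by have := fact_natr_neq0 k; move: (k`!%:R : R) => f f_neq0; field.
Qed.

Lemma binom_poly0 k : (binom_poly k).[0] = (k == 0%N)%:R.
Proof. by have := binom_poly_nat k 0; rewrite bin0n. Qed.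

Lemma size_falling_poly k : size (falling_poly k) = k.+1.
Proof.
rewrite /falling_poly; elim: k => [|k IHk]; first by rewrite big_ord0 size_poly1.
rewrite big_ord_recr /= size_Mmonic ?monicXsubC ?size_XsubC ?IHk ?addn2 //.
by rewrite -size_poly_eq0 IHk.
Qed.

Lemma size_binom_poly k : size (binom_poly k) = k.+1.
Proof. by rewrite size_scale ?size_falling_poly // invr_eq0 fact_natr_neq0. Qed.

Lemma lead_binom_poly k : (binom_poly k)`_k = (k`!%:R)^-1.
Proof.
have : falling_poly k \is monic.
  by apply: monic_prod => i _; apply: monicXsubC.
by rewrite coefZ monicE /lead_coef size_falling_poly /= => /eqP ->; rewrite mulr1.
Qed.

(* The binomial polynomials form a basis: a polynomial of size at most s is a
   combination of binom_poly i, i < s (peel off the leading coefficient). *)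
Lemma binom_poly_span s p : (size p <= s)%N ->
  exists a : nat -> R, (forall i, (s <= i)%N -> a i = 0) /\ p = \sum_(i < s) a i *: binom_poly i.
Proof.
elim: s p => [|s IHs] p size_p.
  exists (fun _ => 0); split => //; rewrite big_ord0.
  by apply/eqP; rewrite -size_poly_eq0 -leqn0.
pose c := p`_s * s`!%:R; pose q := p - c *: binom_poly s.
have size_q : (size q <= s)%N.
  apply/leq_sizeP => j le_sj; rewrite coefB coefZ.
  have [lt_sj | le_js] := ltnP s j; last first.
    have -> : j = s by apply/eqP; rewrite eqn_leq le_sj le_js.
    by rewrite lead_binom_poly -mulrA mulfV ?fact_natr_neq0 // mulr1 subrr.
  have /leq_sizeP p_small := size_p.
  have /leq_sizeP B_small : (size (binom_poly s) <= s.+1)%N by rewrite size_binom_poly.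
  by rewrite p_small // B_small // mulr0 subr0.
have [a [a_small q_sum]] := IHs q size_q.
exists (fun i => if i == s then c else a i); split.
  by move=> i lt_si; rewrite gtn_eqF // a_small // ltnW.
rewrite big_ord_recr /= eqxx.
under eq_bigr => i _ do rewrite (ltn_eqF (ltn_ord i)).
by rewrite -q_sum subrK.
Qed.

Lemma binom_expansion p : exists a : nat -> R,
  a 0%N = p.[0] /\ forall x, p.[x] = \sum_(i < size p) a i * (binom_poly i).[x].
Proof.
have [a [a_small p_sum]] := binom_poly_span (leqnn (size p)).
have p_ev x : p.[x] = \sum_(i < size p) a i * (binom_poly i).[x].
  by rewrite {1}p_sum horner_sum; apply: eq_bigr => i _; rewrite hornerZ.
exists a; split => //; rewrite p_ev.
case: (size p) a_small => [|s] a_small; first by rewrite big_ord0 a_small.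
rewrite big_ord_recl binom_poly0 mulr1 big1 ?addr0 // => i _.
by rewrite binom_poly0 mulr0.
Qed.

Lemma poly_eq_on_nat p q : (forall n, p.[n%:R] = q.[n%:R]) -> p = q.
Proof.
move=> eq_pq; apply/eqP; rewrite -subr_eq0; apply/negPn/negP => nz.
pose rs := [seq (k%:R : R) | k <- iota 0 (size (p - q))].
suff : (size rs < size (p - q)%R)%N by rewrite size_map size_iota ltnn.
apply: max_poly_roots nz _ _.
  by apply/allP => x /mapP[k _ ->]; rewrite /root hornerD hornerN eq_pq subrr.
by rewrite map_inj_uniq ?iota_uniq // => x y /eqP; rewrite eqr_nat => /eqP.
Qed.

End BinomialPolynomials.

Section Convolution.
Variable R : numFieldType.
Local Open Scope ring_scope.
Notation B := (@binom_poly R).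

(* Positive side: the increments binom(m, i) - binom(m-1, i) = binom(m-1, i-1). *)
Lemma binom_conv_nat i j n : (0 < i)%N ->
  \sum_(m < n.+1) ((B i).[m%:R] - (B i).[m.-1%:R]) * (B j).[(n - m)%:R]
  = (B (i + j)).[n%:R].
Proof.
case: i => [//|i] _; rewrite big_ord_recl /= subrr mul0r add0r.
under eq_bigr => m _.
  rewrite !binom_poly_nat /bump /= add1n add0n binS natrD addrAC subrr add0r -natrM.
  have -> : (n - m.+1 = n.-1 - m)%N by lia.
over.
by rewrite -natr_sum sum_binom_conv binom_poly_nat addn1 addSn.
Qed.

Lemma binom_conv_neg i j n : (0 < i)%N -> (0 < j)%N ->
  \sum_(m < n.+1) ((B i).[- m.+1%:R] - (B i).[- m%:R]) * (B j).[- (n - m)%:R]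
  = (B (i + j)).[- n%:R].
Proof.
case: i => [//|i] _; case: j => [//|j] _.
under eq_bigr => m _.
  rewrite !binom_poly_neg -mulrBr.
  have -> : ((m.+1 + i.+1).-1 = (m + i).+1)%N by lia.
  have -> : ((m + i.+1).-1 = m + i)%N by lia.
  have -> : ((n - m + j.+1).-1 = n - m + j)%N by lia.
  rewrite binS natrD addrAC subrr add0r mulrCA !mulrA -exprD -mulrA -natrM.
over.
rewrite -mulr_sumr -natr_sum sum_binom_conv_upper_succ binom_poly_neg.
by congr (_ * _%:R); [congr (_ ^+ _) | congr binomial]; lia.
Qed.

Lemma sum_mul_expansions n KA KB (a b : nat -> R) (F G : nat -> nat -> R) :
  \sum_(m < n.+1) (\sum_(i < KA) a i * F m i) * (\sum_(j < KB) b j * G m j)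
  = \sum_(i < KA) \sum_(j < KB) a i * b j * \sum_(m < n.+1) F m i * G m j.
Proof.
under eq_bigr => m _ do rewrite mulr_suml; rewrite exchange_big; apply: eq_bigr => i _.
under eq_bigr => m _ do rewrite mulr_sumr; rewrite exchange_big; apply: eq_bigr => j _.
by rewrite mulr_sumr; apply: eq_bigr => m _; ring.
Qed.

(* The convolutions of Omega_ser / Omega_plus_ser preserve polynomiality, with
   a single polynomial S governing both the positive and the negative side. *)
Lemma series_poly (P Q : {poly R}) : P.[0] = 0 -> Q.[0] = 0 ->
  exists S : {poly R}, [/\ S.[0] = 0,
    forall n, \sum_(m < n.+1) (P.[m%:R] - P.[m.-1%:R]) * Q.[(n - m)%:R] = S.[n%:R] &
    forall n, \sum_(m < n.+1) (P.[- m.+1%:R] - P.[- m%:R]) * Q.[- (n - m)%:R]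
              = S.[- n%:R]].
Proof.
move=> P0 Q0.
have [a [a0 evP]] := binom_expansion P; have [b [b0 evQ]] := binom_expansion Q.
rewrite {}P0 in a0; rewrite {}Q0 in b0.
have evPB x y : P.[x] - P.[y] = \sum_(i < size P) a i * ((B i).[x] - (B i).[y]).
  by rewrite !evP -sumrB; apply: eq_bigr => i _; rewrite mulrBr.
pose S := \sum_(i < size P) \sum_(j < size Q) (a i * b j) *: B (i + j).
have evS x : S.[x] = \sum_(i < size P) \sum_(j < size Q) a i * b j * (B (i + j)).[x].
  rewrite horner_sum; apply: eq_bigr => i _.
  by rewrite horner_sum; apply: eq_bigr => j _; rewrite hornerZ.
exists S; split => [|n|n].
- rewrite evS big1 // => i _; rewrite big1 // => j _.
  have [-> | i_gt0] := posnP i; first by rewrite a0 !mul0r.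
  by rewrite binom_poly0 addn_eq0 (gtn_eqF i_gt0) mulr0.
- under eq_bigr do rewrite evPB evQ.
  rewrite (@sum_mul_expansions n _ _ a b (fun m i => (B i).[m%:R] - (B i).[m.-1%:R])
             (fun m j => (B j).[(n - m)%:R])) evS.
  apply: eq_bigr => i _; apply: eq_bigr => j _.
  have [-> | i_gt0] := posnP i; first by rewrite a0 !mul0r.
  by rewrite binom_conv_nat.
- under eq_bigr do rewrite evPB evQ.
  rewrite (@sum_mul_expansions n _ _ a b (fun m i => (B i).[- m.+1%:R] - (B i).[- m%:R])
             (fun m j => (B j).[- (n - m)%:R])) evS.
  apply: eq_bigr => i _; apply: eq_bigr => j _.
  have [-> | i_gt0] := posnP i; first by rewrite a0 !mul0r.
  have [-> | j_gt0] := posnP j; first by rewrite b0 mulr0 !mul0r.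
  by rewrite binom_conv_neg.
Qed.

End Convolution.

Local Open Scope ring_scope.

Definition order_reciprocity (A : finType) (le : rel A) (P : {poly rat}) : Prop :=
  [/\ P.[0] = 0, forall n, (Omega le n)%:R = P.[n%:R]
    & forall n, (Omega_plus le n)%:R = (-1) ^+ #|A| * P.[- n%:R]].

Lemma order_reciprocity_bij (T C : finType) (le : rel T) (leC : rel C) (f : T -> C)
    (P : {poly rat}) :
  bijective f -> (forall x y, le x y = leC (f x) (f y)) ->
  order_reciprocity leC P -> order_reciprocity le P.
Proof.
move=> bij_f le_f [P0 PC PC']; have [f' fK f'K] := bij_f.
have strict_f (h : C -> nat) : strict_mono le (h \o f) = strict_mono leC h.
  apply/forallP/forallP => H u; apply/forallP => v.
    by have := forallP (H (f' u)) (f' v); rewrite le_f /= !f'K (can_eq f'K).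
  by have := forallP (H (f u)) (f v); rewrite -le_f (can_eq fK).
have weak_f (h : C -> nat) : weak_mono le (h \o f) = weak_mono leC h.
  apply/forallP/forallP => H u; apply/forallP => v.
    by have := forallP (H (f' u)) (f' v); rewrite le_f /= !f'K.
  by have := forallP (H (f u)) (f v); rewrite -le_f.
split=> // n; first by rewrite Omega_countE (count_maps_bij n bij_f strict_f) -Omega_countE.
rewrite Omega_plus_countE (count_maps_bij n bij_f weak_f) -Omega_plus_countE.
by rewrite (bij_eq_card bij_f).
Qed.

Lemma order_reciprocity_one : order_reciprocity (@sp_le SP_one) 'X.
Proof.
have count_all n (Q : pred (unit -> nat)) : (forall g, Q g) -> count_maps Q n = n.
  move=> Q_all; rewrite /count_maps (eq_card (B := [set: {ffun unit -> 'I_n}])).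
    by rewrite cardsT card_ffun card_ord card_unit expn1.
  by move=> g; rewrite !inE Q_all.
split=> [|n|n]; rewrite ?hornerX //.
  by rewrite Omega_countE count_all // => g; apply/forallP => -[]; apply/forallP => -[].
rewrite Omega_plus_countE count_all ?card_unit ?mulN1r ?opprK //.
by move=> g; apply/forallP => -[]; apply/forallP => -[] /=.
Qed.

Lemma order_reciprocity_par (A B : finType) (leA : rel A) (leB : rel B) P Q :
  order_reciprocity leA P -> order_reciprocity leB Q ->
  order_reciprocity (parR leA leB) (P * Q).
Proof.
move=> [P0 PA PA'] [Q0 QB QB']; split=> [|n|n]; first by rewrite hornerM P0 mul0r.
  by rewrite Omega_par natrM PA QB hornerM.
by rewrite Omega_plus_par natrM PA' QB' hornerM card_sum exprD; ring.
Qed.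

Lemma order_reciprocity_ser (A B : finType) (leA : rel A) (leB : rel B) P Q :
  order_reciprocity leA P -> order_reciprocity leB Q ->
  exists S, order_reciprocity (serR leA leB) S.
Proof.
move=> [P0 PA PA'] [Q0 QB QB'].
have [S [S0 S_pos S_neg]] := series_poly P0 Q0.
have OmegaA0 : Omega leA 0 = 0%N by apply/eqP; rewrite -(pnatr_eq0 rat) PA P0.
have plusA0 : Omega_plus leA 0 = 0%N.
  by apply/eqP; rewrite -(pnatr_eq0 rat) PA' oppr0 P0 mulr0.
have plusB0 : Omega_plus leB 0 = 0%N.
  by apply/eqP; rewrite -(pnatr_eq0 rat) QB' oppr0 Q0 mulr0.
exists S; split=> // n.
  by rewrite Omega_ser // -S_pos; apply: eq_bigr => m _; rewrite !PA QB.
rewrite Omega_plus_ser // -S_neg card_sum exprD mulr_sumr.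
by apply: eq_bigr => m _; rewrite !PA' QB'; ring.
Qed.

Lemma sp_order_reciprocity (t : sp_term) :
  exists P, order_reciprocity (@sp_le t) P.
Proof.
elim: t => [|a [P HP] b [Q HQ]|a [P HP] b [Q HQ]].
- by exists 'X; apply: order_reciprocity_one.
- exact: (order_reciprocity_ser HP HQ).
- by exists (P * Q); apply: (order_reciprocity_par HP HQ).
Qed.

Lemma series_parallel_reciprocity (T : finType) (le : rel T) :
  series_parallel le -> exists P, order_reciprocity le P.
Proof.
move=> [t [f [bij_f le_f]]]; have [P HP] := sp_order_reciprocity t.
by exists P; apply: order_reciprocity_bij bij_f le_f HP.
Qed.

Lemma coef_one_sub_X_exp (R : comNzRingType) M k :
  ((1 - 'X) ^+ M : {poly R})`_k = (-1) ^+ k * ('C(M, k))%:R.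
Proof.
elim: M k => [|M IHM] k.
  by rewrite expr0 coef1 bin0n; case: k => [|k] /=; rewrite ?mulr0 ?mulr1.
rewrite exprS mulrBl mul1r coefB coefXM.
case: k => [|k] /=; first by rewrite subr0 IHM !bin0.
by rewrite !IHM binS natrD exprS; ring.
Qed.

(* (-1)^(N+i) = (-1)^(N-i), the exponents differ by 2i. *)
Lemma sign_add_sub (R : pzRingType) N i : (i <= N)%N ->
  (-1) ^+ (N + i) = (-1) ^+ (N - i) :> R.
Proof.
move=> le_iN; have -> : (N + i = (N - i) + i.*2)%N by rewrite -addnn; lia.
by rewrite exprD -mul2n exprM expr2 mulrNN mulr1 expr1n mulr1.
Qed.

Section SeriesParallelCoefficients.
Variables (T : finType) (le : rel T) (c : nat -> rat).
Hypothesis hSP : series_parallel le.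
Hypothesis hc : forall n : nat,
  Z_coef le n = \sum_(1 <= i < #|T|.+1) c i * frac_coef i n.

(* The order polynomial is sum_i c_i binom(x, i) (they agree on all naturals);
   evaluating at -(n+1) gives Omega^+(n+1). *)
Lemma Zplus_coef_binomial n :
  Zplus_coef le n.+1
  = \sum_(1 <= i < #|T|.+1) (-1) ^+ (#|T| + i) * c i * ('C(n + i, i))%:R.
Proof.
have [P [P0 P_pos P_neg]] := series_parallel_reciprocity hSP.
pose Pc := \sum_(1 <= i < #|T|.+1) c i *: binom_poly rat i.
have evPc x : Pc.[x] = \sum_(1 <= i < #|T|.+1) c i * (binom_poly rat i).[x].
  by rewrite horner_sum; apply: eq_bigr => i _; rewrite hornerZ.
have P_Pc : P = Pc.
  apply: poly_eq_on_nat => m; rewrite evPc.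
  have -> : P.[m%:R] = Z_coef le m by case: m => [|m]; rewrite ?P0 // -P_pos.
  by rewrite hc; apply: eq_bigr => i _; rewrite binom_poly_nat.
rewrite /Zplus_coef P_neg P_Pc evPc mulr_sumr; apply: eq_bigr => i _.
rewrite binom_poly_neg exprD; have -> : ((n.+1 + i).-1 = n + i)%N by lia.
ring.
Qed.

(* Multiplying by (1-x)^(N+1) turns binom(n+i, i) into binom(N-i, j). *)
Lemma hstar_binomial j :
  hstar le j
  = \sum_(1 <= i < #|T|.+1) (-1) ^+ (#|T| + i + j) * c i * ('C(#|T| - i, j))%:R.
Proof.
rewrite /hstar big_ord_recr /= subnn mulr0 addr0.
under eq_bigr => k _.
  rewrite coef_one_sub_X_exp.
  have -> : (j.+1 - k = (j - k).+1)%N by have := ltn_ord k; lia.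
  rewrite Zplus_coef_binomial mulr_sumr.
over.
rewrite exchange_big /=; apply: eq_big_nat => i /andP[i_gt0 lt_iT].
rewrite (eq_bigr (fun k : 'I_j.+1 => (-1) ^+ (#|T| + i) * c i *
    ((-1) ^+ k * ('C(#|T|.+1, k))%:R * ('C(j - k + i, i))%:R))); last by move=> k _; ring.
by rewrite -mulr_sumr alt_sum_binom_upper //= [in RHS]exprD; ring.
Qed.

End SeriesParallelCoefficients.

Section HStarCoefficients.
Variables (R : comNzRingType) (N : nat) (c h : nat -> R).
Local Open Scope ring_scope.
Hypothesis h_def : forall j,
  h j = \sum_(1 <= i < N.+1) (-1) ^+ (N + i + j) * c i * ('C(N - i, j))%:R.

(* Terms with i > N - j vanish, and (-1)^(N+i) = (-1)^(N-i). *)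
Lemma hcoef_truncated j : (j <= N)%N ->
  h j = \sum_(1 <= i < (N - j).+1) (-1) ^+ (N - i + j) * c i * ('C(N - i, j))%:R.
Proof.
move=> le_jN; rewrite h_def (@big_cat_nat _ _ _ (N - j).+1) //= ?ltnS ?leq_subr //.
rewrite [X in _ + X]big_nat_cond [X in _ + X]big1 ?addr0; last first.
  by move=> i /andP[/andP[lt_i lt_iN] _]; rewrite bin_small ?mulr0 //; lia.
apply: eq_big_nat => i /andP[_ lt_i].
by rewrite exprD (@sign_add_sub R N i) -?exprD //; lia.
Qed.

(* Summing over j, only i = N survives: the alternating row sums vanish. *)
Lemma sum_hcoef : (0 < N)%N -> \sum_(j < N.+1) h j = c N.
Proof.
move=> N_gt0; under eq_bigr do rewrite h_def; rewrite exchange_big /=.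
have inner i : (i < N.+1)%N -> \sum_(j < N.+1) (-1) ^+ (N + i + j) * c i * ('C(N - i, j))%:R
                              = (-1) ^+ (N + i) * c i * ((N - i)%N == 0%N)%:R.
  move=> lt_iN; rewrite -(@alt_sum_binom_full R (N - i) N (leq_subr i N)) mulr_sumr.
  by apply: eq_bigr => j _; rewrite exprD; ring.
transitivity (\sum_(1 <= i < N.+1) (-1) ^+ (N + i) * c i * ((N - i)%N == 0%N)%:R).
  by apply: eq_big_nat => i /andP[_ lt_iN]; apply: inner.
rewrite big_nat_recr //= (@sign_add_sub R N N) // !subnn eqxx mulr1 expr0 mul1r.
rewrite big_nat_cond big1 ?add0r // => i /andP[/andP[_ lt_iN] _].
by rewrite subn_eq0 leqNgt lt_iN mulr0.
Qed.

End HStarCoefficients.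

(* Series-parallel posets are nonempty (needed for c_N = sum_j h*_j). *)
Lemma card_sp_gt0 (t : sp_term) : (0 < #|sp_car t|)%N.
Proof.
by elim: t => [|a IHa b _|a IHa b _] /=; rewrite ?card_unit // card_sum addn_gt0 IHa.
Qed.

Lemma series_parallel_card_gt0 (T : finType) (le : rel T) :
  series_parallel le -> (0 < #|T|)%N.
Proof. by move=> [t [f [bij_f _]]]; rewrite (bij_eq_card bij_f) card_sp_gt0. Qed.

Unset Implicit Arguments.
Theorem proposition2p11 (T : finType) (le : rel T)
  (hSP : series_parallel le) (c : nat -> rat)
  (hc : forall n : nat,
      Z_coef le n = \sum_(1 <= i < #|T|.+1) c i * frac_coef i n) :
  (forall j : nat, (j <= #|T|)%N ->
     hstar le j =
     \sum_(1 <= i < (#|T| - j).+1)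
        (-1) ^+ (#|T| - i + j) * c i * ('C(#|T| - i, j))%:R)
  /\ c #|T| = \sum_(i < #|T|.+1) hstar le i.
Proof.
have h_def := hstar_binomial hSP hc.
split; first exact: hcoef_truncated h_def.
by rewrite (sum_hcoef h_def) //; apply: series_parallel_card_gt0 hSP.
Qed.
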